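(* Let $H$ be a $C^2$ null hypersurface, $n$ a $C^1$ future-directed lightlike vector field tangent to $H$, extended near $p\in H$ to a $C^1$ lightlike field with $\nabla_nn=\kappa n$. Let $V$ be a smooth future-directed timelike vector field and use local cylinder coordinates $(x^0,\mathbf x)$ with $V=\partial_0$ in which $H$ is the graph of a $C^2$ function $x^0=h(\mathbf x)$. Define on $H$ the functions of $\mathbf x$ $$\tilde n^i=-g(n,V)\,\big[g^{ij}(h(\mathbf x),\mathbf x)\,\partial_jh-g^{i0}(h(\mathbf x),\mathbf x)\big],\quad i=1,\dots,n,$$ and $\theta=\nabla_\mu n^\mu|_{x^0=h(\mathbf x)}-\kappa$. Then for every $C^1$ function $\varphi:M\to\mathbb R$, $$\partial_i\Big(\varphi\,\tilde n^i\,\frac{\sqrt{-|g|(h(\mathbf x),\mathbf x)}}{-g(n,V)}\Big)=\big[\varphi\,\theta+\partial_n\varphi\big]\frac{\sqrt{-|g|(h(\mathbf x),\mathbf x)}}{-g(n,V)},$$ where all quantities are evaluated at $(h(\mathbf x),\mathbf x)$. Consequently $$\theta=\frac{-g(n,V)}{\sqrt{-|g|}}\,\partial_i\Big\{\big[g^{ij}\partial_jh-g^{i0}\big]\sqrt{-|g|}\Big\}\Big|_{x^0=h(\mathbf x)} .$$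
   Context: Spacetime: paracompact time-oriented Lorentzian manifold of dimension $n+1\ge2$, signature $(-,+,\dots,+)$, $C^3$ metric; $|g|$ denotes $\det g_{\mu\nu}$, $g^{\mu\nu}$ the inverse metric. Local cylinder coordinates: with $S$ a small hypersurface transverse to $V$ carrying coordinates $\mathbf x=(x^1,\dots,x^n)$, the point $\varphi_{x^0}(\mathbf x)$ ($\varphi$ the flow of $V$) has coordinates $(x^0,\mathbf x)$, so $V=\partial_0$. The vector field $\tilde n=\tilde n^i\partial_i$ is the projection of $n$ along the flow of $V$. *)

From Stdlib Require Import Reals Lra ClassicalEpsilon.
Open Scope R_scope.

Fixpoint sumlt (m : nat) (f : nat -> R) : R :=
  match m with
  | O => 0
  | S m' => sumlt m' f + f m'
  end.

Definition minorR (A : nat -> nat -> R) (j : nat) : nat -> nat -> R :=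
  fun r c => A (S r) (if Nat.ltb c j then c else S c).

Fixpoint detR (m : nat) (A : nat -> nat -> R) : R :=
  match m with
  | O => 1
  | S m' => sumlt (S m') (fun j => (-1) ^ j * A 0%nat j * detR m' (minorR A j))
  end.

Definition upd (x : nat -> R) (k : nat) (t : R) : nat -> R :=
  fun j => if Nat.eqb j k then t else x j.

Definition has_partial (F : (nat -> R) -> R) (k : nat) (x : nat -> R) (l : R) : Prop :=
  derivable_pt_lim (fun t => F (upd x k t)) (x k) l.

Definition pd (F : (nat -> R) -> R) (k : nat) (x : nat -> R) : R :=
  epsilon (inhabits 0) (fun l => has_partial F k x l).

Definition near (d : nat) (x y : nat -> R) (delta : R) : Prop :=
  forall k, (k < d)%nat -> Rabs (y k - x k) < delta.

Definition is_open (d : nat) (U : (nat -> R) -> Prop) : Prop :=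
  forall x, U x -> exists delta, 0 < delta /\ forall y, near d x y delta -> U y.

Definition cont_on (d : nat) (U : (nat -> R) -> Prop) (F : (nat -> R) -> R) : Prop :=
  forall x, U x -> forall eps, 0 < eps -> exists delta, 0 < delta /\
    forall y, U y -> near d x y delta -> Rabs (F y - F x) < eps.

Fixpoint Ck (d k : nat) (U : (nat -> R) -> Prop) (F : (nat -> R) -> R) : Prop :=
  match k with
  | O => cont_on d U F
  | S k' =>
      (forall j x, (j < d)%nat -> U x -> exists l, has_partial F j x l) /\
      (forall j, (j < d)%nat -> Ck d k' U (pd F j))
  end.

(* ---------- Lorentzian geometry in a chart of dimension dim+1 ----------
   Coordinates x^0, x^1, ..., x^dim ; the metric is given by its component
   functions g mu nu, and its inverse by gi mu nu. *)

Definition gdot (dim : nat) (g : nat -> nat -> (nat -> R) -> R) (P : nat -> R)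
  (u v : nat -> R) : R :=
  sumlt (S dim) (fun mu => sumlt (S dim) (fun nu => g mu nu P * u mu * v nu)).

Definition minkowski (a b : nat) : R :=
  if Nat.eqb a b then (if Nat.eqb a 0 then -1 else 1) else 0.

Definition lorentzian_at (dim : nat) (g : nat -> nat -> (nat -> R) -> R) (P : nat -> R) : Prop :=
  exists e : nat -> nat -> R,
    forall a b, (a <= dim)%nat -> (b <= dim)%nat -> gdot dim g P (e a) (e b) = minkowski a b.

Definition Gam (dim : nat) (g gi : nat -> nat -> (nat -> R) -> R) (mu nu la : nat)
  (P : nat -> R) : R :=
  / 2 * sumlt (S dim) (fun s =>
     gi mu s P * (pd (g s la) nu P + pd (g s nu) la P - pd (g nu la) s P)).

Definition nabla_vv (dim : nat) (g gi : nat -> nat -> (nat -> R) -> R)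
  (v : (nat -> R) -> nat -> R) (mu : nat) (P : nat -> R) : R :=
  sumlt (S dim) (fun nu => v P nu * pd (fun Q => v Q mu) nu P)
  + sumlt (S dim) (fun nu => sumlt (S dim) (fun la =>
        Gam dim g gi mu nu la P * v P nu * v P la)).

Definition divg (dim : nat) (g gi : nat -> nat -> (nat -> R) -> R)
  (v : (nat -> R) -> nat -> R) (P : nat -> R) : R :=
  sumlt (S dim) (fun mu => pd (fun Q => v Q mu) mu P
     + sumlt (S dim) (fun nu => Gam dim g gi mu mu nu P * v P nu)).

(* the point (h(x), x) ; spatial coordinate x^i (i = 1..dim) is xs (i-1) *)
Definition gpt (h : (nat -> R) -> R) (xs : nat -> R) : nat -> R :=
  fun mu => match mu with O => h xs | S i => xs i end.

Definition detg (dim : nat) (g : nat -> nat -> (nat -> R) -> R) (P : nat -> R) : R :=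
  detR (S dim) (fun mu nu => g mu nu P).

(* g(n, V) with V = partial_0 *)
Definition gnV (dim : nat) (g : nat -> nat -> (nat -> R) -> R)
  (nv : (nat -> R) -> nat -> R) (P : nat -> R) : R :=
  sumlt (S dim) (fun mu => g mu 0%nat P * nv P mu).

Definition Ncomp (dim : nat) (gi : nat -> nat -> (nat -> R) -> R) (h : (nat -> R) -> R)
  (i : nat) (xs : nat -> R) : R :=
  sumlt dim (fun j => gi i (S j) (gpt h xs) * pd h j xs) - gi i 0%nat (gpt h xs).

(* On the graph, the raised conormal [g^{-1} d(x^0 - h)] is null and, by tangency, orthogonal
   to the null vector [n]; two such vectors are proportional, and pairing with [V = d_0] shows
   that [ntilde = n] there.  Each [x^i]-derivative along the graph is [d_i + d_i h d_0], so
   contracting with [n^i] and using tangency once more yields the derivative along [n].  The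
   volume factor [sqrt(-|g|) / (-g(n,V))] is then differentiated with Jacobi's formula, which
   produces the contracted Christoffel symbols, while [n(g(n,V))] is computed from
   [nabla_n n = kappa n]; the remaining [d_0]-terms cancel because [g(n,n) = 0] identically.
   The formula for [theta] is the case [phi = 1]. *)

From Stdlib Require Import Reals Lra Lia ClassicalEpsilon FunctionalExtensionality Classical.
From mathcomp Require all_boot all_order all_algebra Rstruct ring lra.
Open Scope R_scope.

(** * Finite sums *)

Lemma sumlt_ext m f g : (forall i, (i < m)%nat -> f i = g i) -> sumlt m f = sumlt m g.
Proof.
  induction m; simpl; intros H; [reflexivity|].
  rewrite IHm by (intros; apply H; lia). rewrite H by lia. reflexivity.
Qed.

Lemma sumlt_plus m f g : sumlt m (fun i => f i + g i) = sumlt m f + sumlt m g.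
Proof. induction m; simpl; [ring|]. rewrite IHm; ring. Qed.

Lemma sumlt_minus m f g : sumlt m (fun i => f i - g i) = sumlt m f - sumlt m g.
Proof. induction m; simpl; [ring|]. rewrite IHm; ring. Qed.

Lemma sumlt_opp m f : sumlt m (fun i => - f i) = - sumlt m f.
Proof. induction m; simpl; [ring|]. rewrite IHm; ring. Qed.

Lemma sumlt_scal_l m c f : sumlt m (fun i => c * f i) = c * sumlt m f.
Proof. induction m; simpl; [ring|]. rewrite IHm; ring. Qed.

Lemma sumlt_scal_r m c f : sumlt m (fun i => f i * c) = sumlt m f * c.
Proof. induction m; simpl; [ring|]. rewrite IHm; ring. Qed.

Lemma sumlt_zero m f : (forall i, (i < m)%nat -> f i = 0) -> sumlt m f = 0.
Proof.
  induction m; simpl; intros H; [reflexivity|].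
  rewrite IHm by (intros; apply H; lia). rewrite H by lia. ring.
Qed.

Lemma sumlt_first m f : sumlt (S m) f = f 0%nat + sumlt m (fun i => f (S i)).
Proof. induction m; simpl in *; [ring|]. rewrite IHm; ring. Qed.

Lemma sumlt_swap m n f :
  sumlt m (fun i => sumlt n (fun j => f i j)) = sumlt n (fun j => sumlt m (fun i => f i j)).
Proof.
  induction m; simpl.
  - symmetry; apply sumlt_zero; auto.
  - rewrite IHm, <- sumlt_plus; reflexivity.
Qed.

Lemma sumlt_delta_l m i f :
  (i < m)%nat -> sumlt m (fun k => (if Nat.eqb k i then 1 else 0) * f k) = f i.
Proof.
  induction m; intros Hi; [lia|]. simpl. destruct (Nat.eqb_spec m i) as [->|Hmi].
  - rewrite sumlt_zero; [ring|]. intros k Hk. destruct (Nat.eqb_spec k i); [lia|ring].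
  - rewrite IHm by lia. ring.
Qed.

Lemma sumlt_delta_r m i f :
  (i < m)%nat -> sumlt m (fun k => (if Nat.eqb i k then 1 else 0) * f k) = f i.
Proof.
  intros Hi. rewrite <- (sumlt_delta_l m i f Hi).
  apply sumlt_ext; intros k _. rewrite Nat.eqb_sym. reflexivity.
Qed.

(** * Linear algebra *)

Lemma detR_S m A :
  detR (S m) A = sumlt (S m) (fun j => (-1) ^ j * A 0%nat j * detR m (minorR A j)).
Proof. reflexivity. Qed.

(* Indices range over [0..m], as in [gdot]: [gdot dim g P] is [bilin dim (fun a b => g a b P)]. *)
Definition bilin (m : nat) (G : nat -> nat -> R) (u v : nat -> R) : R :=
  sumlt (S m) (fun mu => sumlt (S m) (fun nu => G mu nu * u mu * v nu)).

Definition row_replace (A : nat -> nat -> R) (i : nat) (r : nat -> R) : nat -> nat -> R :=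
  fun a b => if Nat.eqb a i then r b else A a b.

Definition inverse_of (m : nat) (A B : nat -> nat -> R) : Prop :=
  forall a b, (a < m)%nat -> (b < m)%nat ->
    sumlt m (fun k => A a k * B k b) = if Nat.eqb a b then 1 else 0.

Definition orthonormal_frame (m : nat) (G : nat -> nat -> R) (e : nat -> nat -> R) : Prop :=
  forall a b, (a <= m)%nat -> (b <= m)%nat -> bilin m G (e a) (e b) = minkowski a b.

Module LinearAlgebra.
Import all_boot all_order all_algebra Rstruct ring lra.
Import GRing.Theory Num.Theory.
Local Open Scope ring_scope.

Lemma sumlt_big m f : sumlt m f = \sum_(i < m) f i.
Proof. elim: m => [|m IH] /=; first by rewrite big_ord0. by rewrite big_ord_recr /= IH. Qed.

Definition mx m (A : nat -> nat -> R) : 'M[R]_m := \matrix_(i < m, j < m) A i j.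

Lemma detR_det m A : detR m A = \det (mx m A).
Proof.
elim: m A => [|m IH] A; first by rewrite det_mx00.
rewrite detR_S sumlt_big (expand_det_row _ ord0); apply: eq_bigr => j _.
have -> : pow (-1) j = (-1) ^+ j by elim: (nat_of_ord j) => //= k ->; rewrite exprS.
rewrite /cofactor IH !mxE add0n !RmultE mulrCA mulrA; congr (_ * \det _).
apply/matrixP => r c; rewrite !mxE /minorR /=; congr (A _ _).
case: (PeanoNat.Nat.ltb_spec c j) => [/ltP H | /leP H]; rewrite /bump.
  by rewrite leqNgt H.
by rewrite H add1n.
Qed.

Lemma mx_inverse_of m A B : inverse_of m A B -> mx m A *m mx m B = 1%:M.
Proof.
move=> H; apply/matrixP => a b; rewrite !mxE.
rewrite (eq_bigr (fun k : 'I_m => A a k * B k b)); last by move=> k _; rewrite !mxE.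
rewrite -(sumlt_big m (fun k => A a k * B k b)) H; try exact/ltP.
case: (PeanoNat.Nat.eqb_spec a b) => [/val_inj -> | Hab]; first by rewrite eqxx.
by case: eqP => // E; case: Hab; rewrite E.
Qed.

(* Cramer's rule: the adjugate of [A] is [det A] times its inverse [B]. *)
Lemma detR_row_replace m A B i r : (i < m)%coq_nat -> inverse_of m A B ->
  detR m (row_replace A i r) = Rmult (detR m A) (sumlt m (fun k => r k * B k i)).
Proof.
move=> /ltP Hi /mx_inverse_of HAB.
have Hadj : \adj (mx m A) = \det (mx m A) *: mx m B.
  by rewrite -[\adj _]mulmx1 -HAB mulmxA mul_adj_mx mul_scalar_mx.
rewrite RmultE !detR_det sumlt_big (expand_det_row _ (Ordinal Hi)) mulr_sumr.
apply: eq_bigr => k _.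
have -> : cofactor (mx m (row_replace A i r)) (Ordinal Hi) k = cofactor (mx m A) (Ordinal Hi) k.
  rewrite /cofactor; congr (_ * \det _); apply/matrixP => a b; rewrite !mxE /row_replace.
  case: (PeanoNat.Nat.eqb_spec (lift (Ordinal Hi) a) i) => // E.
  by have := neq_lift (Ordinal Hi) a; rewrite -(inj_eq val_inj) /= => /eqP [].
have -> : cofactor (mx m A) (Ordinal Hi) k = \adj (mx m A) k (Ordinal Hi) by rewrite mxE.
by rewrite Hadj !mxE /row_replace PeanoNat.Nat.eqb_refl /= mulrCA.
Qed.

Definition eta m : 'M[R]_m.+1 := diag_mx (\row_(a < m.+1) (if a == ord0 then -1 else 1)).

Lemma mx_minkowski m : mx m.+1 minkowski = eta m.
Proof.
apply/matrixP => a b; rewrite !mxE /minkowski.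
case: (@eqP _ a b) => [<- | Hab]; last first.
  by rewrite mulr0n; case: (PeanoNat.Nat.eqb_spec a b) => // E; case: Hab; apply: val_inj.
rewrite PeanoNat.Nat.eqb_refl mulr1n; case: (PeanoNat.Nat.eqb_spec a 0) => E.
  by have -> : a = ord0 by apply: val_inj.
by case: eqP => // E'; case: E; rewrite E'.
Qed.

Lemma eta_involutive m : eta m *m eta m = 1%:M.
Proof.
rewrite mul_mx_diag; apply/matrixP => a b; rewrite !mxE.
case: (@eqP _ a b) => [-> | _]; last by rewrite mul0r.
by rewrite mulr1n; case: eqP => _; rewrite ?mulrNN mulr1.
Qed.

Lemma det_eta m : \det (eta m) = -1.
Proof.
rewrite det_diag big_ord_recl !mxE eqxx big1 ?mulr1 // => i _.
by rewrite !mxE; case: eqP => // /(congr1 val).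
Qed.

Definition cvec m (x : nat -> R) : 'cV[R]_m.+1 := \col_(i < m.+1) x i.

Definition frame_mx m (e : nat -> nat -> R) : 'M[R]_m.+1 := \matrix_(mu < m.+1, a < m.+1) e a mu.

Lemma bilin_mx m G x y : bilin m G x y = ((cvec m x)^T *m mx m.+1 G *m cvec m y) ord0 ord0.
Proof.
rewrite /bilin sumlt_big !mxE.
rewrite (eq_bigr (fun mu : 'I_m.+1 => \sum_(nu < m.+1) G mu nu * x mu * y nu));
  last by move=> mu _; rewrite sumlt_big.
rewrite exchange_big /=; apply: eq_bigr => nu _.
rewrite !mxE mulr_suml; apply: eq_bigr => mu _; rewrite !mxE.
by rewrite [x mu * _]mulrC.
Qed.

Lemma frame_gram m G e : orthonormal_frame m G e ->
  (frame_mx m e)^T *m mx m.+1 G *m frame_mx m e = eta m.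
Proof.
move=> H; rewrite -mx_minkowski; apply/matrixP => a b.
have Ha : (a <= m)%coq_nat by apply/leP; rewrite -ltnS.
have Hb : (b <= m)%coq_nat by apply/leP; rewrite -ltnS.
rewrite [RHS]mxE -(H a b Ha Hb) bilin_mx !mxE; apply: eq_bigr => nu _; rewrite !mxE.
by congr (_ * _); apply: eq_bigr => mu _; rewrite !mxE.
Qed.

Lemma detR_lorentzian_neg m G e : orthonormal_frame m G e -> Rlt (detR (S m) G) (IZR 0).
Proof.
move=> /frame_gram /(f_equal determinant); rewrite det_eta !det_mulmx det_tr detR_det => E.
apply/RltP; rewrite Order.TotalTheory.ltNge; apply/negP => HG.
have : 0 <= \det (frame_mx m e) * \det (mx m.+1 G) * \det (frame_mx m e).
  by rewrite mulrC mulrA -expr2; apply: mulr_ge0 => //; apply: sqr_ge0.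
by rewrite E ler0N1.
Qed.

Definition eta_form {m} (x y : 'cV[R]_m.+1) := (x^T *m eta m *m y) ord0 ord0.

Lemma eta_formE m (x y : 'cV[R]_m.+1) :
  eta_form x y = - (x ord0 ord0 * y ord0 ord0) + \sum_(k < m) x (lift ord0 k) ord0 * y (lift ord0 k) ord0.
Proof.
rewrite /eta_form mul_mx_diag !mxE big_ord_recl !mxE eqxx mulrN1 mulNr.
congr (_ + _); apply: eq_bigr => k _; rewrite !mxE.
have -> : (lift ord0 k == ord0) = false by apply/negP => /eqP /(congr1 val).
by rewrite mulr1.
Qed.

(* Equality in the reverse Cauchy-Schwarz inequality: the spatial parts satisfy
   [b0 a_k = a0 b_k], since these differences have vanishing sum of squares. *)
Lemma null_orthogonal_parallel m (a b : 'cV[R]_m.+1) :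
  eta_form a a = 0 -> eta_form b b = 0 -> eta_form a b = 0 -> b != 0 ->
  a = (a ord0 ord0 / b ord0 ord0) *: b.
Proof.
rewrite !eta_formE => Haa Hbb Hab Hb.
set a0 := a ord0 ord0 in Haa Hab *; set b0 := b ord0 ord0 in Hbb Hab *.
set ak := fun k : 'I_m => a (lift ord0 k) ord0 in Haa Hab.
set bk := fun k : 'I_m => b (lift ord0 k) ord0 in Hbb Hab.
have Hsum : \sum_(k < m) (b0 * ak k - a0 * bk k) ^+ 2 = 0.
  rewrite (eq_bigr (fun k => b0 ^+ 2 * (ak k * ak k) - (2 * a0 * b0) * (ak k * bk k)
      + a0 ^+ 2 * (bk k * bk k))); last by move=> k _; ring.
  rewrite big_split big_split /= sumrN -!mulr_sumr.
  have -> : \sum_(k < m) ak k * ak k = a0 * a0 by lra.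
  have -> : \sum_(k < m) bk k * bk k = b0 * b0 by lra.
  have -> : \sum_(k < m) ak k * bk k = a0 * b0 by lra.
  ring.
have Hk k : b0 * ak k = a0 * bk k.
  apply/eqP; rewrite -subr_eq0 -sqrf_eq0; apply/eqP.
  by apply: (psumr_eq0P (fun i _ => sqr_ge0 _) Hsum).
have Hb0 : b0 != 0.
  apply: contraNneq Hb => Hb0; apply/eqP/matrixP => i j; rewrite [RHS]mxE ord1.
  case: (unliftP ord0 i) => [k -> | ->] //; apply/eqP; rewrite -sqrf_eq0; apply/eqP.
  have Hs2 : \sum_(k < m) bk k ^+ 2 = 0.
    rewrite (eq_bigr (fun l => bk l * bk l)) => [|l _]; last by rewrite expr2.
    by move: Hbb; rewrite Hb0 /bk; lra.
  exact: (psumr_eq0P (fun l _ => sqr_ge0 _) Hs2).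
apply/matrixP => i j; rewrite mxE ord1.
case: (unliftP ord0 i) => [k -> | ->]; last by rewrite divfK.
by apply: (mulfI Hb0); rewrite -/(ak k) Hk -/(bk k); field.
Qed.

Lemma null_orthogonal_proportional m G e u v :
  orthonormal_frame m G e ->
  bilin m G u u = IZR 0 -> bilin m G v v = IZR 0 -> bilin m G u v = IZR 0 ->
  (exists mu, (mu <= m)%coq_nat /\ v mu <> IZR 0) ->
  exists lam, forall mu, (mu <= m)%coq_nat -> u mu = Rmult lam (v mu).
Proof.
move=> /frame_gram HE Huu Hvv Huv [mu0 [Hmu0 Hv0]].
set E := frame_mx m e in HE; set L := eta m *m E^T *m mx m.+1 G.
have HLE : L *m E = 1%:M by rewrite /L -!mulmxA (mulmxA E^T) HE eta_involutive.
have HEL : E *m L = 1%:M := mulmx1C HLE.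
have Hcoord x : cvec m x = E *m (L *m cvec m x) by rewrite mulmxA HEL mul1mx.
have Hform x y : bilin m G x y = eta_form (L *m cvec m x) (L *m cvec m y).
  by rewrite bilin_mx {1}(Hcoord x) {1}(Hcoord y) /eta_form -HE trmx_mul !mulmxA.
have Hmu0' : (mu0 < m.+1)%N by apply/ltP; apply/le_n_S.
have Hb : L *m cvec m v != 0.
  apply/eqP => Hb; apply: Hv0.
  by have := congr1 (fun M : 'cV[R]_m.+1 => M (Ordinal Hmu0') ord0) (Hcoord v); rewrite Hb mulmx0 !mxE.
rewrite !Hform in Huu Hvv Huv.
have Hab := @null_orthogonal_parallel m _ _ Huu Hvv Huv Hb.
eexists => mu Hmu; have Hmu' : (mu < m.+1)%N by apply/ltP; apply/le_n_S.
have := congr1 (fun M : 'cV[R]_m.+1 => M (Ordinal Hmu') ord0) (Hcoord u).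
rewrite Hab -scalemxAr -Hcoord !mxE.
by apply.
Qed.

End LinearAlgebra.

(** * Partial derivatives and the chain rule along graphs *)

Lemma pd_unique F k x l : has_partial F k x l -> pd F k x = l.
Proof.
  intros H. unfold pd.
  apply (uniqueness_limite _ _ _ _ (epsilon_spec (inhabits 0) _ (ex_intro _ l H)) H).
Qed.

Lemma pd_spec F k x : (exists l, has_partial F k x l) -> has_partial F k x (pd F k x).
Proof. intros [l H]. rewrite (pd_unique F k x l H). exact H. Qed.

Lemma derivable_pt_lim_sumlt m (f : nat -> R -> R) (l : nat -> R) t0 :
  (forall i, (i < m)%nat -> derivable_pt_lim (f i) t0 (l i)) ->
  derivable_pt_lim (fun t => sumlt m (fun i => f i t)) t0 (sumlt m l).
Proof.
  induction m; simpl; intros H.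
  - apply derivable_pt_lim_const.
  - apply (derivable_pt_lim_plus (fun t => sumlt m (fun i => f i t)) (f m));
      [apply IHm; intros i Hi|]; apply H; lia.
Qed.

Lemma derivable_pt_lim_sqrt_comp f lf t0 : derivable_pt_lim f t0 lf -> 0 < f t0 ->
  derivable_pt_lim (fun t => sqrt (f t)) t0 (lf / (2 * sqrt (f t0))).
Proof.
  intros Hf Hpos. unfold Rdiv. rewrite Rmult_comm.
  exact (derivable_pt_lim_comp f sqrt t0 lf _ Hf (derivable_pt_lim_sqrt _ Hpos)).
Qed.

Lemma derivable_pt_lim_near f g t0 l :
  (exists d, 0 < d /\ forall t, Rabs (t - t0) < d -> f t = g t) ->
  derivable_pt_lim f t0 l -> derivable_pt_lim g t0 l.
Proof.
  intros [d [Hd H]]. apply derivable_pt_lim_locally_ext with (t0 - d) (t0 + d); [lra|].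
  intros z Hz. apply H, Rabs_def1; lra.
Qed.

Lemma MVT_between f f' x y : (forall c, Rmin x y <= c <= Rmax x y -> derivable_pt_lim f c (f' c)) ->
  exists c, Rmin x y <= c <= Rmax x y /\ f y - f x = f' c * (y - x).
Proof.
  intros H. destruct (Rtotal_order x y) as [Hxy|[<-|Hxy]].
  - rewrite Rmin_left, Rmax_right in * by lra.
    destruct (MVT_cor2 f f' x y Hxy H) as [c [Hc1 Hc2]]. exists c. split; [lra|auto].
  - exists x. rewrite Rmin_left, Rmax_left by lra. split; [lra|ring].
  - rewrite Rmin_right, Rmax_left in * by lra.
    destruct (MVT_cor2 f f' y x Hxy H) as [c [Hc1 Hc2]]. exists c. split; [lra|]. lra.
Qed.

Lemma increment_bound f f' x y M :
  (forall c, Rmin x y <= c <= Rmax x y -> derivable_pt_lim f c (f' c) /\ Rabs (f' c) <= M) ->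
  Rabs (f y - f x) <= M * Rabs (y - x).
Proof.
  intros H. destruct (MVT_between f f' x y) as [c [Hc ->]]; [apply H|].
  rewrite Rabs_mult. apply Rmult_le_compat_r; [apply Rabs_pos|apply H; auto].
Qed.

Lemma between_dist c x y : Rmin x y <= c <= Rmax x y -> Rabs (c - x) <= Rabs (y - x).
Proof. unfold Rmin, Rmax. destruct (Rle_dec x y); intros H; unfold Rabs; repeat destruct Rcase_abs; lra. Qed.

(* The hypothesis says that [f] is differentiable as a function of [a], with derivative [D]. *)
Lemma derivable_pt_lim_through f a t0 a' D : derivable_pt_lim a t0 a' ->
  (forall eps, 0 < eps -> exists delta, 0 < delta /\ forall t, Rabs (t - t0) < delta ->
     Rabs (f t - f t0 - D * (a t - a t0)) <= eps * Rabs (a t - a t0)) ->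
  derivable_pt_lim f t0 (D * a').
Proof.
  intros Ha Hf eps Heps.
  set (K := Rabs a' + 1). assert (HK : 0 < K) by (unfold K; pose proof (Rabs_pos a'); lra).
  destruct (Hf (eps / (2 * K))) as [d1 [Hd1 Hd1']]; [apply Rdiv_lt_0_compat; lra|].
  destruct (Ha (Rmin 1 (eps / (2 * (Rabs D + 1))))) as [d2 Hd2].
  { apply Rmin_pos; [lra|]. apply Rdiv_lt_0_compat; [lra|]. pose proof (Rabs_pos D); lra. }
  exists (mkposreal _ (Rmin_pos _ _ Hd1 (cond_pos d2))). simpl. intros h Hh0 Hh.
  pose proof (Rmin_l d1 d2). pose proof (Rmin_r d1 d2).
  set (q := (a (t0 + h) - a t0) / h).
  assert (Hq : Rabs (q - a') < Rmin 1 (eps / (2 * (Rabs D + 1)))) by (apply Hd2; lra).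
  pose proof (Rmin_l 1 (eps / (2 * (Rabs D + 1)))). pose proof (Rmin_r 1 (eps / (2 * (Rabs D + 1)))).
  assert (HqK : Rabs q <= K).
  { unfold K. pose proof (Rabs_triang (q - a') a'). replace (q - a' + a') with q in * by ring. lra. }
  assert (Hf1 := Hd1' (t0 + h) ltac:(replace (t0 + h - t0) with h by ring; lra)).
  replace (a (t0 + h) - a t0) with (q * h) in Hf1 by (unfold q; field; auto).
  replace ((f (t0 + h) - f t0) / h - D * a') with
    ((f (t0 + h) - f t0 - D * (q * h)) / h + D * (q - a')) by (unfold q; field; auto).
  eapply Rle_lt_trans; [apply Rabs_triang|].
  unfold Rdiv. rewrite !Rabs_mult, Rabs_inv.
  assert (Hh' : 0 < Rabs h) by (apply Rabs_pos_lt; auto).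
  assert (E1 : Rabs (f (t0 + h) - f t0 - D * (q * h)) * / Rabs h <= eps / (2 * K) * K).
  { apply (Rmult_le_reg_r (Rabs h)); [lra|]. rewrite Rmult_assoc, Rinv_l by lra.
    rewrite Rabs_mult in Hf1. pose proof (Rabs_pos h).
    assert (eps / (2 * K) * (Rabs q * Rabs h) <= eps / (2 * K) * K * Rabs h).
    { rewrite Rmult_assoc. apply Rmult_le_compat_l; [apply Rlt_le, Rdiv_lt_0_compat; lra|].
      apply Rmult_le_compat_r; lra. }
    lra. }
  replace (eps / (2 * K) * K) with (eps / 2) in E1 by (field; lra).
  assert (E2 : Rabs D * Rabs (q - a') <= Rabs D * (eps / (2 * (Rabs D + 1)))).
  { apply Rmult_le_compat_l; [apply Rabs_pos|lra]. }
  assert (E3 : Rabs D * (eps / (2 * (Rabs D + 1))) < eps / 2).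
  { apply (Rmult_lt_reg_r (2 * (Rabs D + 1))); [pose proof (Rabs_pos D); lra|].
    replace (Rabs D * (eps / (2 * (Rabs D + 1))) * (2 * (Rabs D + 1))) with (Rabs D * eps)
      by (field; pose proof (Rabs_pos D); lra).
    pose proof (Rabs_pos D). nra. }
  lra.
Qed.

Lemma upd_upd x k s t : upd (upd x k s) k t = upd x k t.
Proof. apply functional_extensionality; intro j; unfold upd. destruct (Nat.eqb j k); auto. Qed.

Lemma upd_same x k : upd x k (x k) = x.
Proof. apply functional_extensionality; intro j; unfold upd. destruct (Nat.eqb_spec j k); subst; auto. Qed.

Lemma upd_eq x k t : upd x k t k = t.
Proof. unfold upd. rewrite Nat.eqb_refl. reflexivity. Qed.

Lemma upd_swap x j k s t : j <> k -> upd (upd x j s) k t = upd (upd x k t) j s.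
Proof.
  intros Hjk. apply functional_extensionality; intro i; unfold upd.
  destruct (Nat.eqb_spec i k), (Nat.eqb_spec i j); subst; auto; lia.
Qed.

Lemma near_upd d x k t delta : 0 < delta -> Rabs (t - x k) < delta -> near d x (upd x k t) delta.
Proof.
  intros Hd Ht j _. unfold upd. destruct (Nat.eqb_spec j k); subst; auto.
  rewrite Rminus_diag, Rabs_R0. exact Hd.
Qed.

Lemma open_upd d U x k : is_open d U -> U x ->
  exists delta, 0 < delta /\ forall t, Rabs (t - x k) < delta -> U (upd x k t).
Proof.
  intros HU Hx. destruct (HU x Hx) as [delta [Hd Hnear]].
  exists delta. split; auto. intros t Ht. apply Hnear, near_upd; auto.
Qed.

(* Continuity is only ever established in a coordinate plane: [Ck] constrains the coordinates
   [< d] alone, so existence of partials cannot give continuity in the sense of [cont_on]. *)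
Definition plane (P : nat -> R) (k : nat) (s t : R) : nat -> R := upd (upd P k t) 0 s.

Lemma near_plane d P k s t delta :
  Rabs (s - P 0%nat) < delta -> Rabs (t - P k) < delta -> near d P (plane P k s t) delta.
Proof.
  intros Hs Ht j _. unfold plane, upd. destruct (Nat.eqb_spec j 0); subst; auto.
  destruct (Nat.eqb_spec j k); subst; auto.
  rewrite Rminus_diag, Rabs_R0. pose proof (Rabs_pos (t - P k)). lra.
Qed.

Lemma plane_axis P k t : k <> 0%nat -> plane P k (P 0%nat) t = upd P k t.
Proof.
  intros Hk. unfold plane. rewrite upd_swap, upd_same by auto. reflexivity.
Qed.

Lemma has_partial_plane F P k s t l :
  has_partial F 0 (plane P k s t) l -> derivable_pt_lim (fun s' => F (plane P k s' t)) s l.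
Proof.
  unfold has_partial, plane. rewrite upd_eq.
  apply derivable_pt_lim_ext. intros z. rewrite upd_upd. reflexivity.
Qed.

Lemma has_partial_upd F P k t l :
  has_partial F k (upd P k t) l -> derivable_pt_lim (fun t' => F (upd P k t')) t l.
Proof.
  unfold has_partial. rewrite upd_eq.
  apply derivable_pt_lim_ext. intros z. rewrite upd_upd. reflexivity.
Qed.

Definition plane_cont_at (F : (nat -> R) -> R) (P : nat -> R) (k : nat) : Prop :=
  forall eps, 0 < eps -> exists delta, 0 < delta /\
    forall s t, Rabs (s - P 0%nat) < delta -> Rabs (t - P k) < delta ->
      Rabs (F (plane P k s t) - F P) < eps.

Definition plane_bounded (F : (nat -> R) -> R) (P : nat -> R) (k : nat) : Prop :=
  exists delta M, 0 < delta /\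
    forall s t, Rabs (s - P 0%nat) < delta -> Rabs (t - P k) < delta ->
      Rabs (F (plane P k s t)) <= M.

Lemma plane_cont_bounded F P k : plane_cont_at F P k -> plane_bounded F P k.
Proof.
  intros H. destruct (H 1 Rlt_0_1) as [d [Hd H']]. exists d, (Rabs (F P) + 1). split; auto.
  intros s t Hs Ht. specialize (H' s t Hs Ht).
  pose proof (Rabs_triang_inv (F (plane P k s t)) (F P)). lra.
Qed.

Lemma cont_on_plane_cont d U F P k : is_open d U -> U P -> cont_on d U F -> plane_cont_at F P k.
Proof.
  intros HU HP HF eps Heps.
  destruct (HU P HP) as [dU [HdU HU']]. destruct (HF P HP eps Heps) as [dc [Hdc Hc]].
  exists (Rmin dU dc). split; [apply Rmin_pos; auto|]. intros s t Hs Ht.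
  pose proof (Rmin_l dU dc). pose proof (Rmin_r dU dc).
  apply Hc; [apply HU'|]; apply near_plane; lra.
Qed.

(* Both partials are bounded near [P], so by the mean value theorem [F] is Lipschitz there. *)
Lemma plane_cont_of_partials d U F P k : is_open d U -> U P -> k <> 0%nat ->
  (forall Q, U Q -> has_partial F 0 Q (pd F 0 Q)) ->
  (forall Q, U Q -> has_partial F k Q (pd F k Q)) ->
  plane_bounded (pd F 0) P k -> plane_bounded (pd F k) P k -> plane_cont_at F P k.
Proof.
  intros HU HP Hk H0 Hk' [d0 [M0 [Hd0 HM0]]] [d1 [M1 [Hd1 HM1]]] eps Heps.
  destruct (HU P HP) as [dU [HdU HU']].
  set (M := Rabs M0 + Rabs M1 + 1).
  assert (HM : 0 < M) by (unfold M; pose proof (Rabs_pos M0); pose proof (Rabs_pos M1); lra).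
  assert (HM0M : M0 <= M) by (unfold M; pose proof (Rle_abs M0); pose proof (Rabs_pos M1); lra).
  assert (HM1M : M1 <= M) by (unfold M; pose proof (Rle_abs M1); pose proof (Rabs_pos M0); lra).
  set (m := Rmin (Rmin dU d0) (Rmin d1 (eps / (4 * M)))).
  assert (Hm : 0 < m) by (repeat apply Rmin_pos; auto; apply Rdiv_lt_0_compat; lra).
  assert (Hm' : m <= dU /\ m <= d0 /\ m <= d1 /\ m <= eps / (4 * M)).
  { unfold m. pose proof (Rmin_l (Rmin dU d0) (Rmin d1 (eps / (4 * M)))).
    pose proof (Rmin_r (Rmin dU d0) (Rmin d1 (eps / (4 * M)))).
    pose proof (Rmin_l dU d0). pose proof (Rmin_r dU d0).
    pose proof (Rmin_l d1 (eps / (4 * M))). pose proof (Rmin_r d1 (eps / (4 * M))). lra. }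
  exists m. split; auto. intros s t Hs Ht.
  assert (Hin : forall s' t', Rabs (s' - P 0%nat) < m -> Rabs (t' - P k) < m -> U (plane P k s' t'))
    by (intros; apply HU', near_plane; lra).
  assert (E1 : Rabs (F (plane P k s t) - F (plane P k (P 0%nat) t)) <= M * Rabs (s - P 0%nat)).
  { apply (increment_bound (fun s' => F (plane P k s' t)) (fun s' => pd F 0 (plane P k s' t))).
    intros c Hc. pose proof (between_dist _ _ _ Hc). split.
    - apply has_partial_plane, H0, Hin; lra.
    - apply Rle_trans with M0; [apply HM0|]; lra. }
  assert (E2 : Rabs (F (upd P k t) - F (upd P k (P k))) <= M * Rabs (t - P k)).
  { apply (increment_bound (fun t' => F (upd P k t')) (fun t' => pd F k (upd P k t'))).
    intros c Hc. pose proof (between_dist _ _ _ Hc).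
    assert (Hc0 : Rabs (P 0%nat - P 0%nat) < m) by (rewrite Rminus_diag, Rabs_R0; lra).
    rewrite <- plane_axis by auto. split.
    - apply has_partial_upd. rewrite <- plane_axis by auto. apply Hk', Hin; lra.
    - apply Rle_trans with M1; [apply HM1|]; lra. }
  rewrite plane_axis in E1 by auto. rewrite upd_same in E2.
  pose proof (Rabs_triang (F (plane P k s t) - F (upd P k t)) (F (upd P k t) - F P)).
  replace (F (plane P k s t) - F (upd P k t) + (F (upd P k t) - F P))
    with (F (plane P k s t) - F P) in * by ring.
  assert (M * Rabs (s - P 0%nat) <= M * (eps / (4 * M))) by (apply Rmult_le_compat_l; lra).
  assert (M * Rabs (t - P k) <= M * (eps / (4 * M))) by (apply Rmult_le_compat_l; lra).
  replace (M * (eps / (4 * M))) with (eps / 4) in * by (field; lra). lra.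
Qed.

(* [Ck d 3] asserts continuity of the third derivatives only; two applications of the
   previous lemma descend to the first. *)
Lemma Ck3_plane_cont d U F P k : is_open d U -> U P -> (0 < k < d)%nat -> Ck d 3 U F ->
  plane_cont_at (pd F 0) P k.
Proof.
  intros HU HP Hk [_ H1]. destruct (H1 0%nat ltac:(lia)) as [H1p H2].
  assert (Hbd : forall j, (j < d)%nat -> plane_bounded (pd (pd F 0) j) P k).
  { intros j Hj. destruct (H2 j Hj) as [H2p H2c]. apply plane_cont_bounded.
    apply plane_cont_of_partials with d U; auto; try lia.
    1,2: intros Q HQ; apply pd_spec, H2p; auto; lia.
    1,2: apply plane_cont_bounded, cont_on_plane_cont with d U; auto; apply H2c; lia. }
  apply plane_cont_of_partials with d U; auto; try lia.
  1,2: intros Q HQ; apply pd_spec, H1p; auto; lia.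
  1,2: apply Hbd; lia.
Qed.

Lemma derivable_pt_lim_cont f t0 l : derivable_pt_lim f t0 l ->
  forall eps, 0 < eps -> exists delta, 0 < delta /\
    forall t, Rabs (t - t0) < delta -> Rabs (f t - f t0) < eps.
Proof.
  intros Hf eps Heps.
  destruct (derivable_continuous_pt f t0 (exist _ l Hf) eps Heps) as [d [Hd Hd']].
  exists d. split; auto. intros t Ht.
  destruct (Req_dec t t0) as [->|Hne]; [rewrite Rminus_diag, Rabs_R0; lra|].
  apply (Hd' t). split; [split; auto; exact I|exact Ht].
Qed.

Lemma derivable_pt_lim_plane_curve d U Phi P k a a' lk :
  is_open d U -> U P -> k <> 0%nat ->
  (forall Q, U Q -> has_partial Phi 0 Q (pd Phi 0 Q)) -> plane_cont_at (pd Phi 0) P k ->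
  has_partial Phi k P lk -> derivable_pt_lim a (P k) a' -> a (P k) = P 0%nat ->
  derivable_pt_lim (fun t => Phi (plane P k (a t) t)) (P k) (pd Phi 0 P * a' + lk).
Proof.
  intros HU HP Hk H0 Hc0 Hlk Ha Ha0.
  assert (Haxis : derivable_pt_lim (fun t => Phi (plane P k (P 0%nat) t)) (P k) lk).
  { eapply derivable_pt_lim_ext; [intros t; rewrite plane_axis by auto; reflexivity|].
    apply has_partial_upd. rewrite upd_same. exact Hlk. }
  assert (Hoff : derivable_pt_lim
    (fun t => Phi (plane P k (a t) t) - Phi (plane P k (P 0%nat) t)) (P k) (pd Phi 0 P * a')).
  { apply (derivable_pt_lim_through _ a); auto. intros eps Heps.
    destruct (HU P HP) as [dU [HdU HU']]. destruct (Hc0 eps Heps) as [dc [Hdc Hc]].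
    set (m := Rmin dU dc). assert (Hm : 0 < m) by (apply Rmin_pos; auto).
    assert (HmU : m <= dU) by apply Rmin_l. assert (Hmc : m <= dc) by apply Rmin_r.
    destruct (derivable_pt_lim_cont a (P k) a' Ha m Hm) as [da [Hda Hda']].
    exists (Rmin m da). split; [apply Rmin_pos; auto|]. intros t Ht.
    pose proof (Rmin_l m da). pose proof (Rmin_r m da).
    assert (Hat : Rabs (a t - P 0%nat) < m) by (rewrite <- Ha0; apply Hda'; lra).
    rewrite Ha0, Rminus_diag, Rminus_0_r.
    assert (Hinc := increment_bound (fun s => Phi (plane P k s t) - pd Phi 0 P * s)
      (fun s => pd Phi 0 (plane P k s t) - pd Phi 0 P) (P 0%nat) (a t) eps).
    replace (Phi (plane P k (a t) t) - Phi (plane P k (P 0%nat) t) - pd Phi 0 P * (a t - P 0%nat))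
      with (Phi (plane P k (a t) t) - pd Phi 0 P * a t - (Phi (plane P k (P 0%nat) t) - pd Phi 0 P * P 0%nat))
      by ring.
    apply Hinc. intros c Hcin. pose proof (between_dist _ _ _ Hcin). split.
    - cbv beta. replace (pd Phi 0 (plane P k c t) - pd Phi 0 P)
        with (pd Phi 0 (plane P k c t) - pd Phi 0 P * 1) by ring.
      apply (derivable_pt_lim_minus (fun s => Phi (plane P k s t)) (fun s => pd Phi 0 P * s)).
      + apply has_partial_plane, H0, HU', near_plane; lra.
      + apply (derivable_pt_lim_scal id), derivable_pt_lim_id.
    - apply Rlt_le, Hc; lra. }
  eapply derivable_pt_lim_ext; [|exact (derivable_pt_lim_plus _ _ _ _ _ Hoff Haxis)].
  intros t. unfold plus_fct. ring.
Qed.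

Definition chain_regular (d : nat) (U : (nat -> R) -> Prop) (f : (nat -> R) -> R) : Prop :=
  (forall k Q, (k < d)%nat -> U Q -> has_partial f k Q (pd f k Q)) /\
  (forall k P, (0 < k < d)%nat -> U P -> plane_cont_at (pd f 0) P k).

Lemma Ck1_chain_regular d U f : is_open d U -> Ck d 1 U f -> chain_regular d U f.
Proof.
  intros HU [H1 H2]. split.
  - intros k Q Hk HQ. apply pd_spec, H1; auto.
  - intros k P Hk HP. apply cont_on_plane_cont with d U; auto. apply H2; lia.
Qed.

Lemma Ck3_chain_regular d U f : is_open d U -> Ck d 3 U f -> chain_regular d U f.
Proof.
  intros HU H. split.
  - intros k Q Hk HQ. apply pd_spec, (proj1 H); auto.
  - intros k P Hk HP. apply Ck3_plane_cont with d U; auto.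
Qed.

Lemma gpt_upd h xs j t : gpt h (upd xs j t) = plane (gpt h xs) (S j) (h (upd xs j t)) t.
Proof. apply functional_extensionality; intros [|i]; reflexivity. Qed.

Lemma derivable_pt_lim_graph d U f h xs j :
  is_open (S d) U -> U (gpt h xs) -> chain_regular (S d) U f -> (j < d)%nat ->
  has_partial h j xs (pd h j xs) ->
  derivable_pt_lim (fun t => f (gpt h (upd xs j t))) (xs j)
    (pd f 0 (gpt h xs) * pd h j xs + pd f (S j) (gpt h xs)).
Proof.
  intros HU HP [Hf1 Hf2] Hj Hh.
  eapply derivable_pt_lim_ext; [intros t; rewrite gpt_upd; reflexivity|].
  change (xs j) with (gpt h xs (S j)).
  apply derivable_pt_lim_plane_curve with (S d) U; auto.
  - intros Q HQ. apply Hf1; auto; lia.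
  - apply Hf2; auto; lia.
  - apply Hf1; auto; lia.
  - simpl. rewrite upd_same. reflexivity.
Qed.

Lemma derivable_pt_lim_detR m (A : R -> nat -> nat -> R) (A' : nat -> nat -> R) t0 :
  (forall a b, (a < m)%nat -> (b < m)%nat -> derivable_pt_lim (fun t => A t a b) t0 (A' a b)) ->
  derivable_pt_lim (fun t => detR m (A t)) t0
    (sumlt m (fun i => detR m (row_replace (A t0) i (A' i)))).
Proof.
  revert A A'; induction m; intros A A' H; [apply derivable_pt_lim_const|].
  set (A0 := A t0).
  assert (Hminor : forall j, (j < S m)%nat -> derivable_pt_lim (fun t => detR m (minorR (A t) j)) t0
     (sumlt m (fun r => detR m (row_replace (minorR A0 j) r (minorR A' j r))))).
  { intros j Hj. apply (IHm (fun t => minorR (A t) j) (minorR A' j)).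
    intros a b Ha Hb. unfold minorR. apply H; [lia|]. destruct (Nat.ltb_spec b j); lia. }
  assert (HD := derivable_pt_lim_sumlt (S m)
    (fun j t => (-1) ^ j * A t 0%nat j * detR m (minorR (A t) j))
    (fun j => (-1) ^ j * (A' 0%nat j * detR m (minorR A0 j) + A0 0%nat j *
       sumlt m (fun r => detR m (row_replace (minorR A0 j) r (minorR A' j r)))))).
  eapply derivable_pt_lim_ext; [intro; symmetry; apply detR_S|].
  replace (sumlt (S m) (fun i => detR (S m) (row_replace A0 i (A' i))))
    with (sumlt (S m) (fun j => (-1) ^ j * (A' 0%nat j * detR m (minorR A0 j) + A0 0%nat j *
       sumlt m (fun r => detR m (row_replace (minorR A0 j) r (minorR A' j r)))))).
  - apply HD. intros j Hj.
    eapply derivable_pt_lim_ext; [intro; symmetry; apply Rmult_assoc|].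
    apply (derivable_pt_lim_scal (fun t => A t 0%nat j * detR m (minorR (A t) j))).
    apply (derivable_pt_lim_mult (fun t => A t 0%nat j) (fun t => detR m (minorR (A t) j)));
      [apply H; lia|apply Hminor; auto].
  - rewrite (sumlt_first m (fun i => detR (S m) (row_replace A0 i (A' i)))).
    rewrite (sumlt_ext (S m) _ (fun j => (-1) ^ j * A' 0%nat j * detR m (minorR A0 j) +
      sumlt m (fun r => (-1) ^ j * A0 0%nat j * detR m (row_replace (minorR A0 j) r (minorR A' j r)))))
      by (intros j _; rewrite sumlt_scal_l; ring).
    rewrite sumlt_plus, sumlt_swap. reflexivity.
Qed.

Lemma derivable_pt_lim_detR_jacobi m (A : R -> nat -> nat -> R) (A' B : nat -> nat -> R) t0 :
  inverse_of m (A t0) B ->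
  (forall a b, (a < m)%nat -> (b < m)%nat -> derivable_pt_lim (fun t => A t a b) t0 (A' a b)) ->
  derivable_pt_lim (fun t => detR m (A t)) t0
    (detR m (A t0) * sumlt m (fun a => sumlt m (fun b => A' a b * B b a))).
Proof.
  intros HB HA. replace (detR m (A t0) * _) with (sumlt m (fun i => detR m (row_replace (A t0) i (A' i)))).
  - apply derivable_pt_lim_detR; auto.
  - rewrite <- sumlt_scal_l. apply sumlt_ext; intros i Hi.
    apply LinearAlgebra.detR_row_replace; auto.
Qed.

(** * The null hypersurface *)

Section NullHypersurface.

Variable dim : nat.
Variable U : (nat -> R) -> Prop.
Hypothesis HU : is_open (S dim) U.
Variables g gi : nat -> nat -> (nat -> R) -> R.
Hypothesis Hg3 : forall mu nu, (mu <= dim)%nat -> (nu <= dim)%nat -> Ck (S dim) 3 U (g mu nu).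
Hypothesis Hgsym : forall mu nu P, U P -> g mu nu P = g nu mu P.
Hypothesis Hginv : forall mu nu P, (mu <= dim)%nat -> (nu <= dim)%nat -> U P ->
  sumlt (S dim) (fun s => g mu s P * gi s nu P) = (if Nat.eqb mu nu then 1 else 0).
Hypothesis Hlor : forall P, U P -> lorentzian_at dim g P.
Variable Om : (nat -> R) -> Prop.
Hypothesis HOm : is_open dim Om.
Variable h : (nat -> R) -> R.
Hypothesis Hh2 : Ck dim 2 Om h.
Hypothesis HhU : forall xs, Om xs -> U (gpt h xs).
Hypothesis Hnull : forall xs, Om xs ->
  let nu := fun mu => match mu with O => 1 | S j => - pd h j xs end in
  sumlt (S dim) (fun mu => sumlt (S dim) (fun la => gi mu la (gpt h xs) * nu mu * nu la)) = 0.
Variable nv : (nat -> R) -> nat -> R.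
Hypothesis Hn1 : forall mu, (mu <= dim)%nat -> Ck (S dim) 1 U (fun Q => nv Q mu).
Hypothesis Hnnull : forall P, U P -> gdot dim g P (nv P) (nv P) = 0.
Hypothesis Hntan : forall xs, Om xs ->
  nv (gpt h xs) 0%nat = sumlt dim (fun j => pd h j xs * nv (gpt h xs) (S j)).
Hypothesis Hnfut : forall xs, Om xs -> gnV dim g nv (gpt h xs) < 0.
Variable kappa : (nat -> R) -> R.
Hypothesis Hkappa : forall P mu, U P -> (mu <= dim)%nat ->
  nabla_vv dim g gi nv mu P = kappa P * nv P mu.

Lemma gi_inverse P : U P -> inverse_of (S dim) (fun a b => g a b P) (fun a b => gi a b P).
Proof. intros HP a b Ha Hb. apply Hginv; auto; lia. Qed.

Lemma gi_sym P mu nu : U P -> (mu <= dim)%nat -> (nu <= dim)%nat -> gi mu nu P = gi nu mu P.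
Proof.
  intros HP Hmu Hnu.
  transitivity (sumlt (S dim) (fun a => sumlt (S dim) (fun b => g a b P * gi b mu P * gi a nu P))).
  - rewrite <- (sumlt_delta_l (S dim) mu (fun a => gi a nu P)) at 1 by lia.
    apply sumlt_ext; intros a Ha. rewrite sumlt_scal_r, Hginv by (auto; lia). reflexivity.
  - rewrite sumlt_swap, <- (sumlt_delta_l (S dim) nu (fun b => gi b mu P)) by lia.
    apply sumlt_ext; intros b Hb. rewrite <- (Hginv b nu P), <- sumlt_scal_r by (auto; lia).
    apply sumlt_ext; intros a Ha. rewrite (Hgsym a b P HP). ring.
Qed.

Lemma detg_neg P : U P -> detg dim g P < 0.
Proof.
  intros HP. destruct (Hlor P HP) as [e He].
  exact (LinearAlgebra.detR_lorentzian_neg dim (fun a b => g a b P) e He).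
Qed.

(* [conormal xs] is [d(x^0 - h)], and [normal xs] its index-raised vector. *)
Definition conormal (xs : nat -> R) (a : nat) : R :=
  match a with O => 1 | S j => - pd h j xs end.

Definition normal (xs : nat -> R) (mu : nat) : R :=
  sumlt (S dim) (fun a => gi mu a (gpt h xs) * conormal xs a).

Lemma lower_normal xs a : Om xs -> (a <= dim)%nat ->
  sumlt (S dim) (fun b => g a b (gpt h xs) * normal xs b) = conormal xs a.
Proof.
  intros Hxs Ha. unfold normal.
  rewrite (sumlt_ext _ _ (fun b => sumlt (S dim) (fun c => g a b (gpt h xs) * gi b c (gpt h xs) * conormal xs c)))
    by (intros b Hb; rewrite <- sumlt_scal_l; apply sumlt_ext; intros; ring).
  rewrite sumlt_swap, <- (sumlt_delta_r (S dim) a (conormal xs)) by lia.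
  apply sumlt_ext; intros c Hc. rewrite sumlt_scal_r, Hginv by (auto; lia). reflexivity.
Qed.

Lemma bilin_lower G u v :
  bilin dim G u v = sumlt (S dim) (fun mu => u mu * sumlt (S dim) (fun nu => G mu nu * v nu)).
Proof. apply sumlt_ext; intros mu _. rewrite <- sumlt_scal_l. apply sumlt_ext; intros; ring. Qed.

(* [n] and the normal are null and orthogonal (the latter by tangency), hence proportional;
   pairing with [V = d_0] identifies the factor as [g(n, V)]. *)
Lemma nv_normal xs mu : Om xs -> (mu <= dim)%nat ->
  nv (gpt h xs) mu = gnV dim g nv (gpt h xs) * normal xs mu.
Proof.
  intros Hxs Hmu. assert (HP : U (gpt h xs)) by (apply HhU; auto).
  assert (Hlow : forall u, bilin dim (fun a b => g a b (gpt h xs)) u (normal xs) =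
                           sumlt (S dim) (fun a => u a * conormal xs a)).
  { intros u. rewrite bilin_lower. apply sumlt_ext; intros a Ha. rewrite lower_normal by (auto; lia). reflexivity. }
  destruct (Hlor _ HP) as [e He].
  destruct (LinearAlgebra.null_orthogonal_proportional dim (fun a b => g a b (gpt h xs)) e (nv (gpt h xs)) (normal xs))
    as [lam Hlam]; auto.
  - exact (Hnnull _ HP).
  - rewrite Hlow, <- (Hnull xs Hxs). apply sumlt_ext; intros a Ha. unfold normal.
    rewrite <- sumlt_scal_r. apply sumlt_ext; intros b Hb. unfold conormal. ring.
  - rewrite Hlow, sumlt_first. simpl. rewrite (Hntan xs Hxs), Rmult_1_r, <- sumlt_plus.
    apply sumlt_zero. intros; ring.
  - apply NNPP. intros Hz.
    assert (H0 := lower_normal xs 0 Hxs ltac:(lia)).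
    rewrite sumlt_zero in H0; [simpl in H0; lra|]. intros i Hi.
    destruct (Req_dec (normal xs i) 0) as [->|Hne]; [ring|].
    exfalso. apply Hz. exists i. split; auto. lia.
  - replace (gnV dim g nv (gpt h xs)) with lam; [apply Hlam; auto|].
    unfold gnV. rewrite (sumlt_ext _ _ (fun a => lam * (g 0%nat a (gpt h xs) * normal xs a)))
      by (intros a Ha; rewrite Hlam, Hgsym by (auto; lia); ring).
    rewrite sumlt_scal_l, lower_normal by (auto; lia). simpl. ring.
Qed.

Lemma ntil_nv xs j : Om xs -> (j < dim)%nat ->
  - gnV dim g nv (gpt h xs) * Ncomp dim gi h (S j) xs = nv (gpt h xs) (S j).
Proof.
  intros Hxs Hj. rewrite nv_normal by (auto; lia).
  unfold Ncomp, normal. rewrite sumlt_first.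
  rewrite (sumlt_ext dim (fun i => gi (S j) (S i) (gpt h xs) * conormal xs (S i))
    (fun i => - (gi (S j) (S i) (gpt h xs) * pd h i xs))) by (intros; simpl; ring).
  rewrite sumlt_opp. simpl. ring.
Qed.

Lemma lower_nv xs a : Om xs -> (a <= dim)%nat ->
  sumlt (S dim) (fun b => g a b (gpt h xs) * nv (gpt h xs) b) = gnV dim g nv (gpt h xs) * conormal xs a.
Proof.
  intros Hxs Ha. rewrite <- lower_normal, <- sumlt_scal_l by auto.
  apply sumlt_ext; intros b Hb. rewrite nv_normal by (auto; lia). ring.
Qed.

Let vol (ys : nat -> R) : R := sqrt (- detg dim g (gpt h ys)) / (- gnV dim g nv (gpt h ys)).

Lemma g_chain_regular a b : (a <= dim)%nat -> (b <= dim)%nat -> chain_regular (S dim) U (g a b).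
Proof. intros Ha Hb. apply Ck3_chain_regular, Hg3; auto. Qed.

Lemma nv_chain_regular a : (a <= dim)%nat -> chain_regular (S dim) U (fun Q => nv Q a).
Proof. intros Ha. apply Ck1_chain_regular, Hn1; auto. Qed.

Section AtPoint.
Variable xs : nat -> R.
Hypothesis Hxs : Om xs.

Let P := gpt h xs.
Let HP : U P := HhU xs Hxs.
Let G a b := g a b P.
Let Gi a b := gi a b P.
Let N mu := nv P mu.
Let c := gnV dim g nv P.
Let s := sqrt (- detg dim g P).
Let dN a mu := pd (fun Q => nv Q a) mu P.
Let dG a b mu := pd (g a b) mu P.

(* [Dv w j] is the derivative in [x^j] along the graph of a function whose gradient at [P] is [w]. *)
Let Dv (w : nat -> R) (j : nat) : R := w 0%nat * pd h j xs + w (S j).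

Let grad_gnV (nu : nat) : R := sumlt (S dim) (fun mu => dG mu 0%nat nu * N mu + G mu 0%nat * dN mu nu).
Let grad_logdet (nu : nat) : R := sumlt (S dim) (fun a => sumlt (S dim) (fun b => dG a b nu * Gi b a)).

Lemma c_neg : c < 0.
Proof. apply Hnfut; auto. Qed.

Lemma s_pos : 0 < s.
Proof. apply sqrt_lt_R0. pose proof (detg_neg P HP). lra. Qed.

Lemma s_sqr : s * s = - detg dim g P.
Proof. apply sqrt_sqrt. pose proof (detg_neg P HP). lra. Qed.

Lemma graph_deriv f j : chain_regular (S dim) U f -> (j < dim)%nat ->
  derivable_pt_lim (fun t => f (gpt h (upd xs j t))) (xs j) (Dv (fun mu => pd f mu P) j).
Proof.
  intros Hf Hj. apply (derivable_pt_lim_graph dim U); auto.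
  apply pd_spec, (proj1 Hh2); auto.
Qed.

Lemma Dv_sumlt2 (f : nat -> nat -> nat -> R) j :
  sumlt (S dim) (fun a => sumlt (S dim) (fun b => Dv (f a b) j)) =
  Dv (fun mu => sumlt (S dim) (fun a => sumlt (S dim) (fun b => f a b mu))) j.
Proof.
  unfold Dv.
  rewrite (sumlt_ext _ _ (fun a => sumlt (S dim) (fun b => f a b 0%nat) * pd h j xs
                                  + sumlt (S dim) (fun b => f a b (S j))))
    by (intros; rewrite sumlt_plus, sumlt_scal_r; reflexivity).
  rewrite sumlt_plus, sumlt_scal_r. reflexivity.
Qed.

Lemma graph_deriv_gnV j : (j < dim)%nat ->
  derivable_pt_lim (fun t => gnV dim g nv (gpt h (upd xs j t))) (xs j) (Dv grad_gnV j).
Proof.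
  intros Hj.
  replace (Dv grad_gnV j) with (sumlt (S dim) (fun mu => Dv (dG mu 0%nat) j * N mu + G mu 0%nat * Dv (dN mu) j)).
  - apply (derivable_pt_lim_sumlt (S dim)
      (fun mu t => g mu 0%nat (gpt h (upd xs j t)) * nv (gpt h (upd xs j t)) mu)).
    intros mu Hmu.
    assert (H := derivable_pt_lim_mult _ _ _ _ _
      (graph_deriv (g mu 0) j (g_chain_regular mu 0 ltac:(lia) ltac:(lia)) Hj)
      (graph_deriv (fun Q => nv Q mu) j (nv_chain_regular mu ltac:(lia)) Hj)).
    cbv beta in H. rewrite upd_same in H. exact H.
  - unfold grad_gnV, Dv.
    rewrite (sumlt_ext _ _ (fun mu => (dG mu 0%nat 0%nat * N mu + G mu 0%nat * dN mu 0%nat) * pd h j xs +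
       (dG mu 0%nat (S j) * N mu + G mu 0%nat * dN mu (S j)))) by (intros; ring).
    rewrite sumlt_plus, sumlt_scal_r. reflexivity.
Qed.

Lemma graph_deriv_detg j : (j < dim)%nat ->
  derivable_pt_lim (fun t => detg dim g (gpt h (upd xs j t))) (xs j) (detg dim g P * Dv grad_logdet j).
Proof.
  intros Hj.
  assert (H := derivable_pt_lim_detR_jacobi (S dim) (fun t a b => g a b (gpt h (upd xs j t)))
    (fun a b => Dv (dG a b) j) (fun a b => Gi a b) (xs j)).
  cbv beta in H. rewrite upd_same in H. unfold grad_logdet. rewrite <- Dv_sumlt2.
  replace (sumlt (S dim) (fun a => sumlt (S dim) (fun b => Dv (fun mu => dG a b mu * Gi b a) j)))
    with (sumlt (S dim) (fun a => sumlt (S dim) (fun b => Dv (dG a b) j * Gi b a)))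
    by (apply sumlt_ext; intros; apply sumlt_ext; intros; unfold Dv; ring).
  apply H; [apply gi_inverse, HP|].
  intros a b Ha Hb. apply (graph_deriv (g a b)); [apply g_chain_regular|]; lia.
Qed.

Lemma graph_deriv_sqrt_detg j : (j < dim)%nat ->
  derivable_pt_lim (fun t => sqrt (- detg dim g (gpt h (upd xs j t)))) (xs j) (s * Dv grad_logdet j / 2).
Proof.
  intros Hj. pose proof s_pos as Hs. pose proof s_sqr as Hss.
  assert (Hpos : 0 < - detg dim g (gpt h (upd xs j (xs j))))
    by (rewrite upd_same; pose proof (detg_neg P HP); unfold P in *; lra).
  assert (H := derivable_pt_lim_sqrt_comp _ _ _
    (derivable_pt_lim_opp _ _ _ (graph_deriv_detg j Hj)) Hpos).
  unfold opp_fct in H. rewrite upd_same in H. fold P s in H.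
  replace (s * Dv grad_logdet j / 2) with (- (detg dim g P * Dv grad_logdet j) / (2 * s))
    by (replace (detg dim g P) with (- (s * s)) by lra; field; lra).
  exact H.
Qed.

Lemma graph_deriv_vol j : (j < dim)%nat ->
  derivable_pt_lim (fun t => vol (upd xs j t)) (xs j) (vol xs * (Dv grad_logdet j / 2 - Dv grad_gnV j / c)).
Proof.
  intros Hj. pose proof s_pos as Hs. pose proof c_neg as Hc.
  assert (Hnz : opp_fct (fun t => gnV dim g nv (gpt h (upd xs j t))) (xs j) <> 0)
    by (unfold opp_fct; rewrite upd_same; fold P c; lra).
  assert (H := derivable_pt_lim_div _ _ _ _ _ (graph_deriv_sqrt_detg j Hj)
    (derivable_pt_lim_opp _ _ _ (graph_deriv_gnV j Hj)) Hnz).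
  unfold opp_fct in H. rewrite upd_same in H. fold P s c in H.
  unfold vol. fold P s c.
  replace (s / - c * (Dv grad_logdet j / 2 - Dv grad_gnV j / c))
    with ((s * Dv grad_logdet j / 2 * - c - - Dv grad_gnV j * s) / (- c)²) by (unfold Rsqr; field; lra).
  exact H.
Qed.

Lemma graph_deriv_nv_vol j : (j < dim)%nat ->
  derivable_pt_lim (fun t => nv (gpt h (upd xs j t)) (S j) * vol (upd xs j t)) (xs j)
    (Dv (dN (S j)) j * vol xs + N (S j) * (vol xs * (Dv grad_logdet j / 2 - Dv grad_gnV j / c))).
Proof.
  intros Hj.
  assert (H := derivable_pt_lim_mult _ _ _ _ _
    (graph_deriv (fun Q => nv Q (S j)) j (nv_chain_regular (S j) ltac:(lia)) Hj) (graph_deriv_vol j Hj)).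
  cbv beta in H. rewrite upd_same in H. exact H.
Qed.

(* Tangency of [n] turns derivatives along the graph into the derivative along [n]. *)
Lemma sum_Dv_tangent w : sumlt dim (fun j => Dv w j * N (S j)) = sumlt (S dim) (fun mu => N mu * w mu).
Proof.
  unfold Dv. rewrite sumlt_first.
  rewrite (sumlt_ext dim _ (fun j => w 0%nat * (pd h j xs * N (S j)) + N (S j) * w (S j))) by (intros; ring).
  rewrite sumlt_plus, sumlt_scal_l. unfold N, P. rewrite (Hntan xs Hxs). ring.
Qed.

Lemma christoffel_trace :
  sumlt (S dim) (fun mu => sumlt (S dim) (fun nu => Gam dim g gi mu mu nu P * N nu)) =
  / 2 * sumlt (S dim) (fun nu => N nu * grad_logdet nu).
Proof.
  rewrite sumlt_swap, <- sumlt_scal_l. apply sumlt_ext; intros nu Hnu.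
  rewrite sumlt_scal_r. unfold Gam. rewrite sumlt_scal_l.
  rewrite (sumlt_ext _ _ (fun mu => sumlt (S dim) (fun a => gi mu a P * pd (g a mu) nu P) +
      (sumlt (S dim) (fun a => gi mu a P * pd (g a nu) mu P)
       - sumlt (S dim) (fun a => gi mu a P * pd (g mu nu) a P))))
    by (intros mu _; rewrite <- sumlt_minus, <- sumlt_plus; apply sumlt_ext; intros; ring).
  rewrite sumlt_plus, sumlt_minus.
  (* the last two Christoffel terms cancel, by symmetry of [g^-1] *)
  replace (sumlt (S dim) (fun mu => sumlt (S dim) (fun a => gi mu a P * pd (g a nu) mu P)))
    with (sumlt (S dim) (fun mu => sumlt (S dim) (fun a => gi mu a P * pd (g mu nu) a P))).
  2:{ rewrite sumlt_swap. apply sumlt_ext; intros a Ha. apply sumlt_ext; intros b Hb.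
      rewrite (gi_sym P b a) by (auto; lia). reflexivity. }
  unfold grad_logdet. rewrite sumlt_swap.
  replace (sumlt (S dim) (fun a => sumlt (S dim) (fun b => dG a b nu * Gi b a)))
    with (sumlt (S dim) (fun a => sumlt (S dim) (fun b => gi b a P * pd (g a b) nu P)))
    by (apply sumlt_ext; intros; apply sumlt_ext; intros; unfold dG, Gi; ring).
  unfold N. ring.
Qed.

Lemma dG_sym a b mu : (a <= dim)%nat -> (b <= dim)%nat -> (mu <= dim)%nat -> dG a b mu = dG b a mu.
Proof.
  intros Ha Hb Hmu. unfold dG. apply pd_unique.
  destruct (open_upd (S dim) U P mu HU HP) as [d [Hd Hd']].
  assert (Hba : has_partial (g b a) mu P (pd (g b a) mu P))
    by (apply (proj1 (g_chain_regular b a Hb Ha)); auto; lia).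
  refine (derivable_pt_lim_near _ _ _ _ _ Hba).
  exists d. split; [exact Hd|]. intros t Ht. apply Hgsym, Hd'; auto.
Qed.

Lemma lower_christoffel nu la : (nu <= dim)%nat -> (la <= dim)%nat ->
  sumlt (S dim) (fun mu => G mu 0%nat * Gam dim g gi mu nu la P) =
  / 2 * (dG 0%nat la nu + dG 0%nat nu la - dG nu la 0%nat).
Proof.
  intros Hnu Hla. unfold Gam.
  set (X := fun a => pd (g a la) nu P + pd (g a nu) la P - pd (g nu la) a P).
  rewrite (sumlt_ext _ _ (fun mu => / 2 * sumlt (S dim) (fun a => g 0%nat mu P * gi mu a P * X a))).
  2:{ intros mu Hmu. unfold G. rewrite Hgsym by auto.
      rewrite <- sumlt_scal_l, <- sumlt_scal_l, <- sumlt_scal_l. apply sumlt_ext; intros; unfold X; ring. }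
  rewrite sumlt_scal_l, sumlt_swap.
  rewrite (sumlt_ext _ _ (fun a => (if Nat.eqb 0 a then 1 else 0) * X a))
    by (intros a Ha; rewrite sumlt_scal_r, Hginv by (auto; lia); reflexivity).
  rewrite sumlt_delta_r by lia. reflexivity.
Qed.

Let Q0 : R := sumlt (S dim) (fun mu => sumlt (S dim) (fun la => dG mu la 0%nat * N mu * N la)).

(* [n(g(n, V)) = kappa g(n, V) + Q0 / 2], from the geodesic equation [nabla_n n = kappa n]. *)
Lemma n_wc : sumlt (S dim) (fun nu => N nu * grad_gnV nu) = kappa P * c + / 2 * Q0.
Proof.
  set (X1 := sumlt (S dim) (fun nu => sumlt (S dim) (fun la => dG 0%nat la nu * N nu * N la))).
  assert (A1 : sumlt (S dim) (fun nu => N nu * grad_gnV nu) =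
     X1 + sumlt (S dim) (fun mu => G mu 0%nat * sumlt (S dim) (fun nu => N nu * dN mu nu))).
  { unfold grad_gnV. rewrite (sumlt_ext _ _ (fun nu => sumlt (S dim) (fun mu => N nu * dG mu 0%nat nu * N mu) +
       sumlt (S dim) (fun mu => N nu * (G mu 0%nat * dN mu nu))))
      by (intros nu _; rewrite <- sumlt_plus, <- sumlt_scal_l; apply sumlt_ext; intros; ring).
    rewrite sumlt_plus. f_equal.
    - unfold X1. apply sumlt_ext; intros nu Hnu. apply sumlt_ext; intros mu Hmu.
      rewrite dG_sym by lia. ring.
    - rewrite sumlt_swap. apply sumlt_ext; intros mu _. rewrite <- sumlt_scal_l. apply sumlt_ext; intros; ring. }
  assert (A2 : sumlt (S dim) (fun mu => G mu 0%nat * sumlt (S dim) (fun nu => N nu * dN mu nu)) =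
      kappa P * c - sumlt (S dim) (fun mu => G mu 0%nat * sumlt (S dim) (fun nu => sumlt (S dim) (fun la =>
          Gam dim g gi mu nu la P * N nu * N la)))).
  { unfold c, gnV. rewrite <- sumlt_scal_l, <- sumlt_minus. apply sumlt_ext; intros mu Hmu.
    assert (Hk := Hkappa P mu HP ltac:(lia)). unfold nabla_vv in Hk.
    replace (kappa P * (g mu 0%nat P * nv P mu)) with (g mu 0%nat P * (kappa P * nv P mu)) by ring.
    rewrite <- Hk. unfold N, dN, G. ring. }
  assert (A3 : sumlt (S dim) (fun mu => G mu 0%nat * sumlt (S dim) (fun nu => sumlt (S dim) (fun la =>
          Gam dim g gi mu nu la P * N nu * N la))) =
      sumlt (S dim) (fun nu => sumlt (S dim) (fun la =>
          / 2 * (dG 0%nat la nu + dG 0%nat nu la - dG nu la 0%nat) * N nu * N la))).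
  { rewrite (sumlt_ext _ _ (fun mu => sumlt (S dim) (fun nu => sumlt (S dim) (fun la =>
          G mu 0%nat * Gam dim g gi mu nu la P * N nu * N la)))).
    2:{ intros mu _. rewrite <- sumlt_scal_l. apply sumlt_ext; intros nu _. rewrite <- sumlt_scal_l.
        apply sumlt_ext; intros; ring. }
    rewrite sumlt_swap. apply sumlt_ext; intros nu Hnu. rewrite sumlt_swap. apply sumlt_ext; intros la Hla.
    rewrite <- lower_christoffel by lia. rewrite !sumlt_scal_r. reflexivity. }
  assert (A4 : sumlt (S dim) (fun nu => sumlt (S dim) (fun la =>
          / 2 * (dG 0%nat la nu + dG 0%nat nu la - dG nu la 0%nat) * N nu * N la)) = / 2 * (X1 + X1 - Q0)).
  { rewrite (sumlt_ext _ _ (fun nu => / 2 * (sumlt (S dim) (fun la => dG 0%nat la nu * N nu * N la) +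
       sumlt (S dim) (fun la => dG 0%nat nu la * N nu * N la) - sumlt (S dim) (fun la => dG nu la 0%nat * N nu * N la))))
      by (intros nu _; rewrite <- sumlt_plus, <- sumlt_minus, <- sumlt_scal_l; apply sumlt_ext; intros; ring).
    rewrite sumlt_scal_l, sumlt_minus, sumlt_plus. do 3 f_equal.
    unfold X1. rewrite sumlt_swap. apply sumlt_ext; intros; apply sumlt_ext; intros; ring. }
  rewrite A1, A2, A3, A4. field.
Qed.

Lemma x0_deriv_null :
  Q0 + 2 * sumlt (S dim) (fun a => sumlt (S dim) (fun b => G a b * N b) * dN a 0%nat) = 0.
Proof.
  assert (Hd : derivable_pt_lim (fun t => gdot dim g (upd P 0 t) (nv (upd P 0 t)) (nv (upd P 0 t))) (P 0%nat)
     (sumlt (S dim) (fun mu => sumlt (S dim) (fun nu =>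
        (dG mu nu 0%nat * N mu + G mu nu * dN mu 0%nat) * N nu + G mu nu * N mu * dN nu 0%nat)))).
  { apply (derivable_pt_lim_sumlt (S dim)
      (fun mu t => sumlt (S dim) (fun nu => g mu nu (upd P 0 t) * nv (upd P 0 t) mu * nv (upd P 0 t) nu))).
    intros mu Hmu.
    apply (derivable_pt_lim_sumlt (S dim) (fun nu t => g mu nu (upd P 0 t) * nv (upd P 0 t) mu * nv (upd P 0 t) nu)).
    intros nu Hnu.
    assert (Hg := proj1 (g_chain_regular mu nu ltac:(lia) ltac:(lia)) 0%nat P ltac:(lia) HP).
    assert (Hm := proj1 (nv_chain_regular mu ltac:(lia)) 0%nat P ltac:(lia) HP).
    assert (Hn := proj1 (nv_chain_regular nu ltac:(lia)) 0%nat P ltac:(lia) HP).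
    assert (H := derivable_pt_lim_mult _ _ _ _ _ (derivable_pt_lim_mult _ _ _ _ _ Hg Hm) Hn).
    unfold mult_fct in H. rewrite upd_same in H. exact H. }
  assert (H0 : sumlt (S dim) (fun mu => sumlt (S dim) (fun nu =>
        (dG mu nu 0%nat * N mu + G mu nu * dN mu 0%nat) * N nu + G mu nu * N mu * dN nu 0%nat)) = 0).
  { apply (uniqueness_limite _ _ _ _ Hd).
    destruct (open_upd (S dim) U P 0 HU HP) as [d [Hdp Hd']].
    apply (derivable_pt_lim_near (fun _ => 0)); [|apply derivable_pt_lim_const].
    exists d. split; [exact Hdp|]. intros t Ht. symmetry. apply Hnnull, Hd'; auto. }
  rewrite <- H0. symmetry.
  rewrite (sumlt_ext _ _ (fun mu => sumlt (S dim) (fun nu => dG mu nu 0%nat * N mu * N nu) +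
      (sumlt (S dim) (fun nu => G mu nu * N nu) * dN mu 0%nat + sumlt (S dim) (fun nu => G mu nu * N mu * dN nu 0%nat))))
    by (intros mu _; rewrite <- sumlt_scal_r, <- !sumlt_plus; apply sumlt_ext; intros; ring).
  rewrite !sumlt_plus. unfold Q0.
  replace (sumlt (S dim) (fun mu => sumlt (S dim) (fun nu => G mu nu * N mu * dN nu 0%nat)))
    with (sumlt (S dim) (fun a => sumlt (S dim) (fun b => G a b * N b) * dN a 0%nat)); [ring|].
  rewrite sumlt_swap. apply sumlt_ext; intros a Ha. rewrite sumlt_scal_r. f_equal.
  apply sumlt_ext; intros b Hb. unfold G. rewrite (Hgsym b a P HP). ring.
Qed.

(* [d_0 g(n, n) = 0], expressed through the conormal via [g(n, .) = g(n, V) d(x^0 - h)]. *)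
Lemma null_x0 :
  c * (dN 0%nat 0%nat - sumlt dim (fun j => pd h j xs * dN (S j) 0%nat)) = - / 2 * Q0.
Proof.
  assert (H0 := x0_deriv_null).
  rewrite (sumlt_ext _ _ (fun a => c * conormal xs a * dN a 0%nat)) in H0
    by (intros a Ha; unfold G, N, c, P; rewrite lower_nv by (auto; lia); reflexivity).
  rewrite sumlt_first in H0. simpl in H0.
  rewrite (sumlt_ext dim _ (fun j => - (c * (pd h j xs * dN (S j) 0%nat)))) in H0 by (intros; ring).
  rewrite sumlt_opp, sumlt_scal_l in H0. lra.
Qed.

Lemma sum_Dv_dN : sumlt dim (fun j => Dv (dN (S j)) j) =
  sumlt (S dim) (fun mu => dN mu mu) - (dN 0%nat 0%nat - sumlt dim (fun j => pd h j xs * dN (S j) 0%nat)).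
Proof.
  unfold Dv. rewrite sumlt_first, sumlt_plus.
  rewrite (sumlt_ext dim (fun j => dN (S j) 0%nat * pd h j xs) (fun j => pd h j xs * dN (S j) 0%nat))
    by (intros; ring).
  ring.
Qed.

(* The case [phi = 1] of the divergence identity: [d_j (n^j vol) = theta vol]. *)
Lemma sum_deriv_nv_vol :
  sumlt dim (fun j => Dv (dN (S j)) j * vol xs + N (S j) * (vol xs * (Dv grad_logdet j / 2 - Dv grad_gnV j / c))) =
  (divg dim g gi nv P - kappa P) * vol xs.
Proof.
  pose proof c_neg as Hc.
  rewrite (sumlt_ext _ _ (fun j => vol xs * Dv (dN (S j)) j + vol xs / 2 * (Dv grad_logdet j * N (S j))
                                   - vol xs / c * (Dv grad_gnV j * N (S j))))
    by (intros; field; lra).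
  rewrite sumlt_minus, sumlt_plus, !sumlt_scal_l, !sum_Dv_tangent, sum_Dv_dN, n_wc.
  assert (HR0 := null_x0).
  unfold divg. rewrite sumlt_plus. fold P.
  change (sumlt (S dim) (fun mu => pd (fun Q => nv Q mu) mu P)) with (sumlt (S dim) (fun mu => dN mu mu)).
  change (sumlt (S dim) (fun mu => sumlt (S dim) (fun nu => Gam dim g gi mu mu nu P * nv P nu)))
    with (sumlt (S dim) (fun mu => sumlt (S dim) (fun nu => Gam dim g gi mu mu nu P * N nu))).
  rewrite christoffel_trace.
  replace (dN 0%nat 0%nat - sumlt dim (fun j => pd h j xs * dN (S j) 0%nat)) with (- / 2 * Q0 / c)
    by (rewrite <- HR0; field; lra).
  field. lra.
Qed.

Lemma divergence_identity_at phi : Ck (S dim) 1 U phi ->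
  let F := fun (i : nat) (ys : nat -> R) =>
    phi (gpt h ys) * (- gnV dim g nv (gpt h ys) * Ncomp dim gi h i ys) * vol ys in
  (forall i, (1 <= i <= dim)%nat -> exists l, has_partial (F i) (i - 1) xs l) /\
  sumlt dim (fun j => pd (F (S j)) j xs) =
    (phi P * (divg dim g gi nv P - kappa P) + sumlt (S dim) (fun mu => N mu * pd phi mu P)) * vol xs.
Proof.
  intros Hphi F.
  assert (HF : forall j, (j < dim)%nat -> has_partial (F (S j)) j xs
    (Dv (fun mu => pd phi mu P) j * (N (S j) * vol xs) +
     phi P * (Dv (dN (S j)) j * vol xs + N (S j) * (vol xs * (Dv grad_logdet j / 2 - Dv grad_gnV j / c))))).
  { intros j Hj. destruct (open_upd dim Om xs j HOm Hxs) as [d [Hd HOm']].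
    assert (H := derivable_pt_lim_mult _ _ _ _ _
      (graph_deriv phi j (Ck1_chain_regular _ _ _ HU Hphi) Hj) (graph_deriv_nv_vol j Hj)).
    unfold mult_fct in H. rewrite upd_same in H.
    unfold has_partial. refine (derivable_pt_lim_near _ _ _ _ _ H).
    exists d. split; [exact Hd|]. intros t Ht. unfold F. rewrite ntil_nv by auto. ring. }
  split.
  - intros [|j] Hj; [lia|]. rewrite Nat.sub_succ, Nat.sub_0_r. eexists. apply HF. lia.
  - rewrite (sumlt_ext _ _ _ (fun j Hj => pd_unique _ _ _ _ (HF j Hj))).
    rewrite (sumlt_ext _ _ (fun j => vol xs * (Dv (fun mu => pd phi mu P) j * N (S j)) +
      phi P * (Dv (dN (S j)) j * vol xs + N (S j) * (vol xs * (Dv grad_logdet j / 2 - Dv grad_gnV j / c)))))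
      by (intros; ring).
    rewrite sumlt_plus, !sumlt_scal_l, sum_Dv_tangent, sum_deriv_nv_vol. ring.
Qed.

Lemma expansion_at : divg dim g gi nv P - kappa P =
  - c / s * sumlt dim (fun j => pd (fun ys => Ncomp dim gi h (S j) ys * sqrt (- detg dim g (gpt h ys))) j xs).
Proof.
  pose proof c_neg as Hc. pose proof s_pos as Hs.
  rewrite (sumlt_ext _ _
    (fun j => Dv (dN (S j)) j * vol xs + N (S j) * (vol xs * (Dv grad_logdet j / 2 - Dv grad_gnV j / c)))).
  - rewrite sum_deriv_nv_vol. unfold vol. fold P s c. field. lra.
  - intros j Hj. apply pd_unique. destruct (open_upd dim Om xs j HOm Hxs) as [d [Hd HOm']].
    unfold has_partial. refine (derivable_pt_lim_near _ _ _ _ _ (graph_deriv_nv_vol j Hj)).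
    exists d. split; [exact Hd|]. intros t Ht. pose proof (Hnfut _ (HOm' t Ht)).
    rewrite <- ntil_nv by auto. unfold vol. field. lra.
Qed.

End AtPoint.

End NullHypersurface.

Theorem mainTheorem9
  (dim : nat) (Hdim : (1 <= dim)%nat)
  (* chart domain U in R^(dim+1) (cylinder coordinates, V = partial_0) *)
  (U : (nat -> R) -> Prop) (HU : is_open (S dim) U)
  (* metric and inverse metric components *)
  (g gi : nat -> nat -> (nat -> R) -> R)
  (Hg3 : forall mu nu, (mu <= dim)%nat -> (nu <= dim)%nat -> Ck (S dim) 3 U (g mu nu))
  (Hgsym : forall mu nu P, U P -> g mu nu P = g nu mu P)
  (Hginv : forall mu nu P, (mu <= dim)%nat -> (nu <= dim)%nat -> U P ->
     sumlt (S dim) (fun s => g mu s P * gi s nu P) = (if Nat.eqb mu nu then 1 else 0))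
  (Hlor : forall P, U P -> lorentzian_at dim g P)
  (* V = partial_0 is timelike (and defines the future) *)
  (HV : forall P, U P -> g 0%nat 0%nat P < 0)
  (* H = graph of h over the open set Om of R^dim *)
  (Om : (nat -> R) -> Prop) (HOm : is_open dim Om)
  (h : (nat -> R) -> R) (Hh2 : Ck dim 2 Om h)
  (HhU : forall xs, Om xs -> U (gpt h xs))
  (* H is a null hypersurface: its normal dx^0 - d_i h dx^i is null *)
  (Hnull : forall xs, Om xs ->
     let nu := fun mu => match mu with O => 1 | S j => - pd h j xs end in
     sumlt (S dim) (fun mu => sumlt (S dim) (fun la =>
        gi mu la (gpt h xs) * nu mu * nu la)) = 0)
  (* n : C^1 lightlike vector field on U, tangent to H and future directed *)
  (nv : (nat -> R) -> nat -> R)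
  (Hn1 : forall mu, (mu <= dim)%nat -> Ck (S dim) 1 U (fun Q => nv Q mu))
  (Hnnull : forall P, U P -> gdot dim g P (nv P) (nv P) = 0)
  (Hnnz : forall P, U P -> exists mu, (mu <= dim)%nat /\ nv P mu <> 0)
  (Hntan : forall xs, Om xs ->
     nv (gpt h xs) 0%nat = sumlt dim (fun j => pd h j xs * nv (gpt h xs) (S j)))
  (Hnfut : forall xs, Om xs -> gnV dim g nv (gpt h xs) < 0)
  (* nabla_n n = kappa n *)
  (kappa : (nat -> R) -> R)
  (Hkappa : forall P mu, U P -> (mu <= dim)%nat ->
     nabla_vv dim g gi nv mu P = kappa P * nv P mu) :
  let ntil := fun (i : nat) (xs : nat -> R) =>
      - gnV dim g nv (gpt h xs) * Ncomp dim gi h i xs in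
  let vol := fun (xs : nat -> R) =>
      sqrt (- detg dim g (gpt h xs)) / (- gnV dim g nv (gpt h xs)) in
  let theta := fun (xs : nat -> R) =>
      divg dim g gi nv (gpt h xs) - kappa (gpt h xs) in
  (forall phi : (nat -> R) -> R, Ck (S dim) 1 U phi ->
   forall xs, Om xs ->
     let F := fun (i : nat) (ys : nat -> R) => phi (gpt h ys) * ntil i ys * vol ys in
     (forall i, (1 <= i <= dim)%nat -> exists l, has_partial (F i) (i - 1) xs l) /\
     sumlt dim (fun j => pd (F (S j)) j xs)
       = (phi (gpt h xs) * theta xs
          + sumlt (S dim) (fun mu => nv (gpt h xs) mu * pd phi mu (gpt h xs))) * vol xs)
  /\
  (forall xs, Om xs ->
     theta xs = - gnV dim g nv (gpt h xs) / sqrt (- detg dim g (gpt h xs)) *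
       sumlt dim (fun j =>
         pd (fun ys => Ncomp dim gi h (S j) ys * sqrt (- detg dim g (gpt h ys))) j xs)).
Proof.
  intros ntil vol theta. split.
  - intros phi Hphi xs Hxs.
    exact (divergence_identity_at dim U HU g gi Hg3 Hgsym Hginv Hlor Om HOm h Hh2 HhU Hnull
             nv Hn1 Hnnull Hntan Hnfut kappa Hkappa xs Hxs phi Hphi).
  - intros xs Hxs.
    exact (expansion_at dim U HU g gi Hg3 Hgsym Hginv Hlor Om HOm h Hh2 HhU Hnull
             nv Hn1 Hnnull Hntan Hnfut kappa Hkappa xs Hxs).
Qed.
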